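(* Extensibility is hereditary: if a pair $(\Gamma,\mathcal{K})$ is extensible (in degree $2d$), then so is any pair $(\Gamma',\mathcal{K}')$ subordinate to $(\Gamma,\mathcal{K})$.
   Context: All lattices even. For a graph $\Gamma$ (edges with multiplicities), let $\mathbb{Z}\Gamma$ be freely generated by the vertices with $v^2=-2$ and $u\cdot v$ the number of edges between $u\ne v$, and $\operatorname{Fano}_{2d}(\Gamma):=(\mathbb{Z}\Gamma+\mathbb{Z}h)/\ker$, with $h^2=2d>0$, $h\cdot v=1$ for all vertices; it is assumed hyperbolic. For an isotropic subgroup $\mathcal{K}$ of the discriminant group $\operatorname{Fano}(\Gamma)^\vee/\operatorname{Fano}(\Gamma)$ (with its $\mathbb{Q}/2\mathbb{Z}$-valued quadratic form), $\operatorname{Fano}(\Gamma,\mathcal{K})$ is the corresponding even finite index extension. For a root lattice $\operatorname{rt}(S,h)$ spanned by $\{r\in S:r^2=-2, r\cdot h=0\}$ and a Weyl chamber $\Delta$ with simple roots $\mathfrak{b}(\Delta)$, lines are $\operatorname{Fn}_\Delta(S,h)=\{l: l^2=-2, l\cdot h=1, l\cdot e\ge0\ \forall e\in\mathfrak{b}(\Delta)\}$. $(\Gamma,\mathcal{K})$ is extensible if there is a Weyl chamber $\Delta$ for $\operatorname{rt}(\operatorname{Fano}(\Gamma,\mathcal{K}),h)$ with $\Gamma\subset\operatorname{Fn}_\Delta(\operatorname{Fano}(\Gamma,\mathcal{K}),h)$. For an induced subgraph $\Gamma'\subset\Gamma$, $\mathcal{K}|_{\Gamma'}:=\bigl((\operatorname{Fano}(\Gamma')\otimes\mathbb{Q})\cap\operatorname{Fano}(\Gamma,\mathcal{K})\bigr)/\operatorname{Fano}(\Gamma')\subset\operatorname{Fano}(\Gamma')^\vee/\operatorname{Fano}(\Gamma')$,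 where $\operatorname{Fano}(\Gamma')$ is identified with the sublattice of $\operatorname{Fano}(\Gamma,\mathcal{K})$ spanned by $h$ and $\Gamma'$. $(\Gamma',\mathcal{K}')$ is subordinate to $(\Gamma,\mathcal{K})$ if $\Gamma'\subset\Gamma$ is an induced subgraph and $\mathcal{K}'\subset\mathcal{K}|_{\Gamma'}$. *)

From HB Require Import structures.
From mathcomp Require Import all_boot all_order all_algebra.
Set Implicit Arguments. Unset Strict Implicit. Unset Printing Implicit Defensive.
Import Order.TTheory GRing.Theory Num.Theory.
Local Open Scope ring_scope.

(* A graph with edge multiplicities on the finite vertex type V is given by
   m : V -> V -> nat (symmetric; the diagonal is irrelevant).
   Z Gamma + Z h is modelled as the integral points of Q^(option V), where
   [Some v] is the vertex v and [None] is h.  Everything is done inside the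
   rational vector space vec V = Q^(option V) with the (possibly degenerate)
   Gram form; a subgroup of Fano(Gamma) (x) Q = Q^(option V)/rad is
   represented by its full preimage in Q^(option V). *)

Definition vec (V : finType) := {ffun option V -> rat}.

Section Fano.
Variables (V : finType) (m : V -> V -> nat) (d : nat).

Definition gram (i j : option V) : rat :=
  match i, j with
  | None, None => (2 * d)%:R
  | None, Some _ | Some _, None => 1
  | Some u, Some v => if u == v then -2 else (m u v)%:R
  end.

Definition form (x y : vec V) : rat :=
  \sum_(i : option V) \sum_(j : option V) x i * y j * gram i j.

Definition bvec (i : option V) : vec V := [ffun j => (j == i)%:R].
Definition hvec : vec V := bvec None.

Definition is_int (q : rat) : Prop := denq q = 1%Z.
Definition is_even_int (q : rat) : Prop := is_int (q / 2).

Definition integral (x : vec V) : Prop := forall i, is_int (x i).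

Definition rad (x : vec V) : Prop := forall y, form x y = 0.

(* Fano(Gamma) = (Z Gamma + Z h)/ker, as a preimage in Q^(option V) *)
Definition fanoL (x : vec V) : Prop := exists z, integral z /\ rad (x - z).

Definition fanoDual (x : vec V) : Prop :=
  forall z, fanoL z -> is_int (form x z).

(* hyperbolic: the maximal positive definite subspaces have dimension 1 *)
Definition hyperbolic : Prop :=
  (exists x, 0 < form x x) /\
  ~ (exists x y, 0 < form x x /\ 0 < form x x * form y y - form x y ^+ 2).

(* An isotropic subgroup K of Fano(Gamma)^vee/Fano(Gamma) (w.r.t. the
   Q/2Z-valued quadratic form), represented by its preimage M in the dual,
   which is the even overlattice Fano(Gamma, K). *)
Definition isotropic_ext (M : vec V -> Prop) : Prop :=
  [/\ forall x, fanoL x -> M x,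
      forall x, M x -> fanoDual x,
      forall x y, M x -> M y -> M (x + y),
      forall x, M x -> M (- x)
    & forall x, M x -> is_even_int (form x x)].

Definition root (M : vec V -> Prop) (r : vec V) : Prop :=
  [/\ M r, form r r = -2 & form r hvec = 0].

(* A Weyl chamber of rt(S,h) is determined by a regular vector w (one with
   w.r <> 0 for every root r); the positive roots are those with w.r > 0 and
   the simple roots b(Delta) are the indecomposable positive roots. *)
Definition regular (M : vec V -> Prop) (w : vec V) : Prop :=
  forall r, root M r -> form w r != 0.

Definition pos_root (M : vec V -> Prop) (w r : vec V) : Prop :=
  root M r /\ 0 < form w r.

Definition simple_root (M : vec V -> Prop) (w e : vec V) : Prop :=
  pos_root M w e /\
  ~ (exists a b, [/\ pos_root M w a, pos_root M w b & rad (e - (a + b))]).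

Definition line (M : vec V -> Prop) (w l : vec V) : Prop :=
  [/\ M l, form l l = -2, form l hvec = 1 &
      forall e, simple_root M w e -> 0 <= form l e].

Definition extensible (M : vec V -> Prop) : Prop :=
  exists w, regular M w /\ forall v : V, line M w (bvec (Some v)).

End Fano.

Definition subV (V : finType) (S : {set V}) : finType := {x : V | x \in S}.

Definition induced (V : finType) (m : V -> V -> nat) (S : {set V})
  : subV S -> subV S -> nat := fun a b => m (val a) (val b).

Arguments induced {V} m S _ _.

(* Fano(Gamma') (x) Q identified with the span of h and Gamma' in
   Fano(Gamma) (x) Q: extension by zero. *)
Definition embed_fun (V : finType) (S : {set V}) (x : vec (subV S))
  (i : option V) : rat :=
  match i with
  | None => x None
  | Some v => match (insub v : option (subV S)) with
              | Some a => x (Some a)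
              | None => 0
              end
  end.

Definition embed (V : finType) (S : {set V}) (x : vec (subV S)) : vec V :=
  [ffun i : option V => embed_fun x i].

(* (Gamma', K') subordinate to (Gamma, K): Gamma' induced on S, and
   K' contained in K|_Gamma' = ((Fano(Gamma') (x) Q) cap Fano(Gamma,K))/Fano(Gamma') *)
Definition subordinate (V : finType) (m : V -> V -> nat) (d : nat)
  (M : vec V -> Prop) (S : {set V}) (M' : vec (subV S) -> Prop) : Prop :=
  isotropic_ext (induced m S) d M' /\ forall x, M' x -> M (embed x).
Arguments subordinate {V} m d M S M'.

(* A Weyl chamber of rt(Fano(Gamma, K), h) is given by a regular vector w.
   By hyperbolicity the radical of Fano(Gamma') embeds into that of
   Fano(Gamma), so the functional (w, -) restricted to Fano(Gamma') (x) Q is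
   represented there by some w'.  Roots of Fano(Gamma', K') are roots of
   Fano(Gamma, K), hence w' is regular and every w'-positive root is
   w-positive.  A line of the chamber of w pairs nonnegatively with its simple
   roots, hence, by induction on the integral height, with all w-positive
   roots, and in particular with the simple roots of the chamber of w'. *)

From Pilot Require Import Defs.
From mathcomp Require Import all_boot all_order all_algebra.
From mathcomp Require Import ring.
From Stdlib Require Import Classical.
Set Implicit Arguments. Unset Strict Implicit. Unset Printing Implicit Defensive.
Import Order.TTheory GRing.Theory Num.Theory.
Local Open Scope ring_scope.
(* [form] also names a definition of mathcomp.algebra.sesquilinear. *)
Import Defs.

Lemma big_option (R : nmodType) (T : finType) (F : option T -> R) :
  \sum_(i : option T) F i = F None + \sum_(v : T) F (Some v).
Proof.
rewrite (bigD1 None) //=; congr (_ + _).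
rewrite (reindex_omap Some id) //=; first by apply: eq_bigl => v; rewrite eqxx.
by case.
Qed.

Lemma sum_bvec (T : finType) (k : option T) (F : option T -> rat) :
  \sum_j bvec k j * F j = F k.
Proof.
rewrite (bigD1 k) //= big1 ?addr0; first by rewrite ffunE eqxx mul1r.
by move=> j /negbTE jk; rewrite ffunE jk mul0r.
Qed.

Definition scalev (V : finType) (a : rat) (x : vec V) : vec V :=
  [ffun i => a * x i].

Lemma is_intP q : reflect (is_int q) (q \is a Num.int).
Proof. by rewrite Qint_def; apply: eqP. Qed.

Lemma integral_bvec (V : finType) (i : option V) : integral (bvec i).
Proof. by move=> j; apply/is_intP; rewrite ffunE; case: (j == i). Qed.

Lemma integral_scalev_denom (V : finType) (w : vec V) :
  exists2 N : rat, 0 < N & integral (scalev N w).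
Proof.
exists (\prod_i denq (w i))%:~R; first by rewrite ltr0z prodr_gt0.
move=> i; apply/is_intP; rewrite ffunE (bigD1 i) //= rmorphM /=.
by rewrite mulrAC [_ * w i]mulrC -numqE rpredM ?rpred_int.
Qed.

Section Form.
Variables (V : finType) (m : V -> V -> nat) (d : nat).

Lemma formEr x y : form m d x y = \sum_j y j * \sum_i x i * gram m d i j.
Proof.
rewrite /form exchange_big; apply: eq_bigr => j _; rewrite mulr_sumr.
by apply: eq_bigr => i _; rewrite mulrCA mulrA.
Qed.

Lemma formDr x y z : form m d x (y + z) = form m d x y + form m d x z.
Proof. by rewrite !formEr -big_split; apply: eq_bigr => j _; rewrite ffunE mulrDl. Qed.

Lemma formNr x y : form m d x (- y) = - form m d x y.
Proof. by rewrite !formEr -sumrN; apply: eq_bigr => j _; rewrite ffunE mulNr. Qed.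

Lemma formBr x y z : form m d x (y - z) = form m d x y - form m d x z.
Proof. by rewrite formDr formNr. Qed.

Lemma formZr a x y : form m d x (scalev a y) = a * form m d x y.
Proof. by rewrite !formEr mulr_sumr; apply: eq_bigr => j _; rewrite ffunE mulrA. Qed.

Lemma form0l y : form m d 0 y = 0.
Proof. by rewrite /form big1 // => i _; rewrite big1 // => j _; rewrite ffunE !mul0r. Qed.

Lemma form_coord x y : form m d x y = \sum_j y j * form m d x (bvec j).
Proof. by rewrite formEr; apply: eq_bigr => j _; rewrite formEr sum_bvec. Qed.

Lemma form_bvec i j : form m d (bvec i) (bvec j) = gram m d i j.
Proof. by rewrite formEr !sum_bvec. Qed.

Lemma fanoL_integral x : integral x -> fanoL m d x.
Proof. by move=> x_int; exists x; split=> // y; rewrite subrr form0l. Qed.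

Hypothesis m_sym : forall u v, m u v = m v u.

Lemma gram_sym i j : gram m d i j = gram m d j i.
Proof. by case: i => [u|]; case: j => [v|] //=; rewrite eq_sym m_sym. Qed.

Lemma form_sym x y : form m d x y = form m d y x.
Proof.
rewrite /form exchange_big; apply: eq_bigr => i _; apply: eq_bigr => j _.
by rewrite gram_sym (mulrC (x _)).
Qed.

Lemma formDl x y z : form m d (x + y) z = form m d x z + form m d y z.
Proof. by rewrite !(form_sym _ z) formDr. Qed.

Lemma formZl a x y : form m d (scalev a x) y = a * form m d x y.
Proof. by rewrite form_sym formZr form_sym. Qed.

Lemma form_rad_eq x y z : rad m d (y - z) -> form m d x y = form m d x z.
Proof.
by move=> /(_ x); rewrite form_sym formBr => /eqP; rewrite subr_eq0 => /eqP.
Qed.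

(* If [(x, y) <> 0], correcting [y] by multiples of [h] and [x] gives a vector
   [z] orthogonal to [h] with [(z, z) = 1], so [h] and [z] span a positive
   definite plane. *)
Lemma rad_isotropic_orthogonal h x :
  hyperbolic m d -> 0 < form m d h h ->
  form m d x x = 0 -> form m d x h = 0 -> rad m d x.
Proof.
move=> [_ not_two_pos] hh_gt0 xx0 xh0 y; apply/eqP/negP => /negP xy_neq0.
have hh_neq0 : form m d h h != 0 by rewrite gt_eqF.
pose a := - form m d h y / form m d h h.
pose q := form m d y y + a ^+ 2 * form m d h h + 2%:R * a * form m d h y.
pose s := (1 - q) / (2%:R * form m d x y).
pose z := y + scalev a h + scalev s x.
have hxE : form m d h x = 0 by rewrite form_sym.
have yhE : form m d y h = form m d h y by rewrite form_sym.
have yxE : form m d y x = form m d x y by rewrite form_sym.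
have hz0 : form m d h z = 0.
  by rewrite /z !(formDr, formZr) hxE /a; field.
have zz1 : form m d z z = 1.
  rewrite /z !(formDr, formDl, formZr, formZl) hxE xh0 xx0 yhE yxE /s /q /a.
  by field; rewrite xy_neq0 hh_neq0.
apply: not_two_pos; exists h, z; split => //.
by rewrite hz0 zz1 expr0n /= subr0 mulr1.
Qed.

Local Notation n := #|{: option V}|.

Let sum_enum_val (F : option V -> rat) : \sum_i F i = \sum_(k < n) F (enum_val k).
Proof. by rewrite (reindex _ (onW_bij _ (@enum_val_bij _))). Qed.

Definition gram_mx : 'M[rat]_n :=
  \matrix_(k, l) gram m d (enum_val k) (enum_val l).
Definition coord_row (x : vec V) : 'rV[rat]_n := \row_k x (enum_val k).
Definition of_coord_row (r : 'rV[rat]_n) : vec V := [ffun i => r 0 (enum_rank i)].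

Lemma of_coord_rowK : cancel of_coord_row coord_row.
Proof. by move=> r; apply/rowP => k; rewrite !mxE ffunE enum_valK. Qed.

Lemma gram_mx_tr : gram_mx^T = gram_mx.
Proof. by apply/matrixP => k l; rewrite !mxE gram_sym. Qed.

Lemma form_mx x y : form m d x y = (coord_row x *m gram_mx *m (coord_row y)^T) 0 0.
Proof.
rewrite /form sum_enum_val; under eq_bigr do rewrite sum_enum_val.
rewrite mxE; under [RHS]eq_bigr do rewrite mxE mulr_suml.
rewrite exchange_big; apply: eq_bigr => k _; apply: eq_bigr => l _.
by rewrite !mxE mulrAC.
Qed.

Lemma sum_coord_row (c x : vec V) :
  \sum_i c i * x i = (coord_row c *m (coord_row x)^T) 0 0.
Proof. by rewrite mxE sum_enum_val; apply: eq_bigr => k _; rewrite !mxE. Qed.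

(* [coord_row c] is killed by the cokernel of the symmetric Gram matrix, whose
   columns span the radical, so it lies in the row space of the Gram matrix. *)
Lemma form_represent (c : vec V) :
  (forall x, rad m d x -> \sum_i c i * x i = 0) ->
  exists w, forall x, form m d w x = \sum_i c i * x i.
Proof.
move=> c_rad.
have c_in_rowspace : (coord_row c <= gram_mx)%MS.
  rewrite submxE; apply/eqP/rowP => j; rewrite !mxE.
  pose x := of_coord_row (col j (cokermx gram_mx))^T.
  have x_rad : rad m d x.
    move=> y; rewrite form_mx of_coord_rowK.
    rewrite -[X in _ *m X *m _]gram_mx_tr -trmx_mul colE mulmxA mulmx_coker.
    by rewrite mul0mx trmx0 mul0mx mxE.
  rewrite -[RHS](c_rad x x_rad) sum_enum_val.
  by apply: eq_bigr => k _; rewrite ffunE enum_valK !mxE.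
exists (of_coord_row (coord_row c *m pinvmx gram_mx)) => x.
by rewrite form_mx of_coord_rowK mulmxKpV // sum_coord_row.
Qed.

Variables (M : vec V -> Prop) (HM : isotropic_ext m d M).

Lemma pairing_denom w :
  exists2 N : rat, 0 < N & forall r, M r -> is_int (N * form m d w r).
Proof.
have [N N_gt0 Nw_int] := integral_scalev_denom w.
exists N => // r Mr; have [_ M_dual _ _ _] := HM.
by rewrite -formZl form_sym; apply: M_dual (fanoL_integral Nw_int).
Qed.

Lemma ge0_pos_root w l :
  (forall e, simple_root m d M w e -> 0 <= form m d l e) ->
  forall r, pos_root m d M w r -> 0 <= form m d l r.
Proof.
move=> l_simple_ge0.
have [N N_gt0 N_int] := pairing_denom w.
have height r :
    pos_root m d M w r -> exists2 k : nat, (0 < k)%N & N * form m d w r = k%:R.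
  move=> [[Mr _ _] wr_gt0]; have Nwr_gt0 := mulr_gt0 N_gt0 wr_gt0.
  have /natrP[k k_def] : N * form m d w r \is a Num.nat.
    by rewrite -intrEge0 ?ltW //; apply/is_intP/N_int.
  by exists k => //; rewrite -(ltr0n rat) -k_def.
(* Induction on the height [k]: a non-simple positive root is the sum, up to
   the radical, of two positive roots of smaller height. *)
suff ind k r : pos_root m d M w r -> N * form m d w r = k%:R -> 0 <= form m d l r.
  by move=> r r_pos; have [k _] := height r r_pos; apply: ind.
elim/ltn_ind: k r => k IH r r_pos r_height.
have [r_simple|r_not_simple] := classic (simple_root m d M w r).
  exact: l_simple_ge0.
have [a [b [a_pos b_pos r_ab]]] :
    exists a b, [/\ pos_root m d M w a, pos_root m d M w b & rad m d (r - (a + b))].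
  by apply: NNPP => no_split; apply: r_not_simple.
have form_r y : form m d y r = form m d y a + form m d y b.
  by rewrite (form_rad_eq _ r_ab) formDr.
have [ka ka_gt0 a_height] := height a a_pos.
have [kb kb_gt0 b_height] := height b b_pos.
have k_sum : k = (ka + kb)%N.
  apply/eqP; rewrite -(eqr_nat rat) natrD -r_height -a_height -b_height.
  by rewrite form_r mulrDr.
have ka_lt : (ka < k)%N by rewrite k_sum -{1}[ka]addn0 ltn_add2l.
have kb_lt : (kb < k)%N by rewrite k_sum -{1}[kb]add0n ltn_add2r.
by rewrite form_r addr_ge0 // ?(IH ka ka_lt a) ?(IH kb kb_lt b).
Qed.

End Form.

Section Embed.
Variables (V : finType) (m : V -> V -> nat) (d : nat) (S : {set V}).

Lemma embed_Some (x : vec (subV S)) (a : subV S) :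
  embed x (Some (val a)) = x (Some a).
Proof. by rewrite ffunE /= valK. Qed.

Lemma embed_Some_notin (x : vec (subV S)) v : v \notin S -> embed x (Some v) = 0.
Proof. by move=> vS; rewrite ffunE /= insubF //; apply: negbTE. Qed.

Lemma sum_embed (x : vec (subV S)) (F : option V -> rat) :
  \sum_j embed x j * F j = \sum_i x i * F (omap val i).
Proof.
rewrite !big_option ffunE; congr (_ + _).
rewrite (bigID (mem S)) /= [X in _ + X]big1 ?addr0; last first.
  by move=> v vS; rewrite embed_Some_notin ?mul0r.
rewrite (big_sub S (fun v => embed x (Some v) * F (Some v))).
by apply: eq_bigr => a _; rewrite embed_Some.
Qed.

Lemma gram_induced i j :
  gram m d (omap val i) (omap val j) = gram (induced m S) d i j.
Proof. by case: i => [a|]; case: j => [b|] //=; rewrite val_eqE. Qed.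

Lemma form_embed (x y : vec (subV S)) :
  form m d (embed x) (embed y) = form (induced m S) d x y.
Proof.
rewrite !formEr sum_embed; apply: eq_bigr => j _; congr (_ * _).
by rewrite sum_embed; apply: eq_bigr => i _; rewrite gram_induced.
Qed.

Lemma embed_bvec (i : option (subV S)) : embed (bvec i) = bvec (omap val i).
Proof.
apply/ffunP => -[v|]; last by rewrite !ffunE /= ffunE; case: i.
have [vS|vS] := boolP (v \in S); last first.
  rewrite embed_Some_notin // ffunE; case: i => [a|] //=.
  by case: eqP => // -[va]; rewrite va (valP a) in vS.
have -> : v = val (Sub v vS : subV S) by [].
rewrite embed_Some !ffunE /=.
by case: i => [a|] //=; rewrite -(inj_eq val_inj).
Qed.

Lemma embed_hvec : embed (hvec (subV S)) = hvec V.
Proof. exact: embed_bvec. Qed.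

Lemma root_embed (M : vec V -> Prop) (M' : vec (subV S) -> Prop) r :
  (forall x, M' x -> M (embed x)) ->
  root (induced m S) d M' r -> root m d M (embed r).
Proof.
move=> M'_M [M'r rr rh]; split; first exact: M'_M.
  by rewrite form_embed.
by rewrite -embed_hvec form_embed.
Qed.

Hypotheses (m_sym : forall u v, m u v = m v u) (d_gt0 : (0 < d)%N).
Hypothesis hyp : hyperbolic m d.

Lemma rad_embed x : rad (induced m S) d x -> rad m d (embed x).
Proof.
move=> x_rad; apply: (rad_isotropic_orthogonal m_sym (h := hvec V)) => //.
- by rewrite form_bvec ltr0n muln_gt0.
- by rewrite form_embed.
- by rewrite -embed_hvec form_embed.
Qed.

Lemma form_embed_represent w :
  exists w', forall x, form (induced m S) d w' x = form m d w (embed x).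
Proof.
have induced_sym u v : induced m S u v = induced m S v u by apply: m_sym.
pose c : vec (subV S) := [ffun i => form m d w (embed (bvec i))].
have wE x : form m d w (embed x) = \sum_i c i * x i.
  rewrite form_coord sum_embed; apply: eq_bigr => i _.
  by rewrite ffunE embed_bvec mulrC.
have [w' w'E] : exists w', forall x, form (induced m S) d w' x = \sum_i c i * x i.
  by apply: form_represent => // x /rad_embed x_rad; rewrite -wE form_sym.
by exists w' => x; rewrite w'E wE.
Qed.

End Embed.

Theorem corollary3p3 (V : finType) (m : V -> V -> nat)
  (m_sym : forall u v, m u v = m v u) (d : nat) (d_gt0 : (0 < d)%N)
  (hyp : hyperbolic m d)
  (M : vec V -> Prop) (HM : isotropic_ext m d M)
  (S : {set V}) (M' : vec (subV S) -> Prop)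
  (Hsub : subordinate m d M S M') :
  extensible m d M -> extensible (induced m S) d M'.
Proof.
move=> [w [w_reg w_lines]]; have [M'_ext M'_M] := Hsub.
have [w' w'E] := form_embed_represent S m_sym d_gt0 hyp w.
exists w'; split=> [r /(root_embed M'_M) /w_reg|v]; first by rewrite w'E.
have [_ ll lh l_simple] := w_lines (val v).
have vE : embed (bvec (Some v)) = bvec (Some (val v)) := embed_bvec _.
split.
- have [fanoL_M' _ _ _ _] := M'_ext.
  exact/fanoL_M'/fanoL_integral/integral_bvec.
- by rewrite -form_embed vE.
- by rewrite -form_embed vE embed_hvec.
- move=> e [[e_root e_pos] _]; rewrite -form_embed vE.
  apply: (ge0_pos_root m_sym HM l_simple); split; first exact: (root_embed M'_M).
  by rewrite -w'E.
Qed.
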